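(* Let $\psi:\mathbb N\to(0,1/2)$ be non-increasing with $\lim_{n\to\infty}n\psi(n)=0$. Let $\{y_n\}_{n\in\mathbb N}$ be positive numbers such that $$r_n:=\tfrac12\min\{\psi(n)^{-2}y_n,\ n^{-2}y_n^{-1}\}\to\infty\quad (n\to\infty).$$ If $x\in[0,1)$ is primitive $\psi$-approximable, then $\mathcal R_n(x,y_n)\subset\mathcal C_{r_n}$ for infinitely many $n$.
   Context: $x\in\mathbb R$ is primitive $\psi$-approximable if there are infinitely many $n\in\mathbb N$ for which some $m\in\mathbb Z$ with $\gcd(m,n)=1$ satisfies $|x-\tfrac mn|<\tfrac{\psi(n)}{n}$. $\Gamma=\mathrm{SL}_2(\mathbb Z)$, $\mathcal M=\Gamma\backslash\mathbb H$; for $Y>0$, $\mathcal C_Y\subset\mathcal M$ is the image of $\{z\in\mathbb H:\mathrm{Im}(z)>Y\}$ under the projection $\mathbb H\to\mathcal M$. $\mathcal R_n(x,y)=\{\Gamma(x+\tfrac jn+iy):0\le j\le n-1\}$. *)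

From Stdlib Require Import Reals ZArith Znumtheory.
From Coquelicot Require Import Coquelicot.
Open Scope R_scope.

Definition in_SL2Z (a b c d : Z) : Prop := (a * d - b * c = 1)%Z.

Definition mobius (a b c d : Z) (z : C) : C :=
  Cdiv (Cplus (Cmult (RtoC (IZR a)) z) (RtoC (IZR b)))
       (Cplus (Cmult (RtoC (IZR c)) z) (RtoC (IZR d))).

(* For z in H, the orbit Gamma z lies in the cusp neighbourhood C_Y, i.e.
   some point of the orbit of z has imaginary part > Y. *)
Definition in_cusp (Y : R) (z : C) : Prop :=
  exists a b c d : Z, in_SL2Z a b c d /\ Y < Im (mobius a b c d z).

(* R_n(x,y) = { Gamma(x + j/n + i y) : 0 <= j <= n-1 } is contained in C_Y. *)
Definition Rn_in_cusp (n : nat) (x y Y : R) : Prop :=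
  forall j : nat, (j < n)%nat -> in_cusp Y (x + INR j / INR n, y).

Definition primitive_psi_approximable (psi : nat -> R) (x : R) : Prop :=
  forall N : nat, exists n : nat, (N <= n)%nat /\ (1 <= n)%nat /\
    exists m : Z, Z.gcd m (Z.of_nat n) = 1%Z /\
      Rabs (x - IZR m / INR n) < psi n / INR n.

Definition r_seq (psi : nat -> R) (y : nat -> R) (n : nat) : R :=
  / 2 * Rmin (y n / (psi n) ^ 2) (/ ((INR n) ^ 2 * y n)).

(* Write x + j/n = (m + j)/n + d with |d| < psi(n)/n, and reduce (m + j)/n to
   p/q with q <= n.  A matrix of SL_2(Z) with bottom row (q, -p) sends the cusp
   p/q to infinity, and moves x + j/n + i y to a point of imaginary part
   y / (q^2 (d^2 + y^2)).  Since q|d| < psi(n) and q y <= n y, the denominator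
   is below psi(n)^2 + n^2 y^2 <= 2 max(psi(n)^2, n^2 y^2), which gives an
   imaginary part larger than r_n.  This happens for every n of the
   approximation sequence. *)
From Stdlib Require Import Reals ZArith Znumtheory Lia Lra Psatz.
From Coquelicot Require Import Coquelicot.
Open Scope R_scope.

Lemma Im_mobius (a b c d : Z) (X Y : R) :
  (IZR c * X + IZR d) ^ 2 + (IZR c * Y) ^ 2 <> 0 ->
  Im (mobius a b c d (X, Y)) =
  (IZR a * IZR d - IZR b * IZR c) * Y / ((IZR c * X + IZR d) ^ 2 + (IZR c * Y) ^ 2).
Proof.
  intros H. unfold mobius, Cdiv, Cmult, Cplus, Cinv, RtoC, Im; simpl.
  field.
  replace ((IZR c * X + IZR d) * (IZR c * X + IZR d) + IZR c * Y * (IZR c * Y))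
    with ((IZR c * X + IZR d) ^ 2 + (IZR c * Y) ^ 2) by ring.
  exact H.
Qed.

Lemma exists_reduced_fraction (k n : Z) : (0 < n)%Z ->
  exists p q : Z, (1 <= q <= n)%Z /\ (k * q = p * n)%Z /\ Z.gcd p q = 1%Z.
Proof.
  intros Hn.
  set (g := Z.gcd k n).
  assert (Hg : (0 < g)%Z).
  { assert (0 <= g)%Z by apply Z.gcd_nonneg.
    assert (g <> 0%Z) by (intros H0; apply Z.gcd_eq_0 in H0; lia).
    lia. }
  destruct (Z.gcd_divide_l k n) as [p Hp].
  destruct (Z.gcd_divide_r k n) as [q Hq].
  fold g in Hp, Hq.
  exists p, q.
  assert (Hpq : Z.gcd p q = 1%Z).
  { assert (Hgpq := Z.gcd_mul_mono_r p q g).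
    rewrite <- Hp, <- Hq, Z.abs_eq in Hgpq by lia.
    fold g in Hgpq. nia. }
  repeat split; nia.
Qed.

Lemma in_cusp_near_rational (p q : Z) (d Y r : R) :
  Z.gcd p q = 1%Z -> (1 <= q)%Z -> 0 < Y ->
  r * (IZR q ^ 2 * (d ^ 2 + Y ^ 2)) < Y ->
  in_cusp r (IZR p / IZR q + d, Y).
Proof.
  intros Hpq Hq HY Hr.
  destruct (Z.gcd_bezout _ _ _ Hpq) as [u [v Huv]].
  exists (- u)%Z, (- v)%Z, q, (- p)%Z.
  split; [unfold in_SL2Z; lia|].
  assert (Hq0 : 0 < IZR q) by (apply IZR_lt; lia).
  assert (Hshift : IZR q * (IZR p / IZR q + d) + IZR (- p) = IZR q * d).
  { rewrite opp_IZR. field. lra. }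
  assert (Hdet : IZR (- u) * IZR (- p) - IZR (- v) * IZR q = 1).
  { rewrite <- !mult_IZR, <- minus_IZR. f_equal. lia. }
  set (S := (IZR q * d) ^ 2 + (IZR q * Y) ^ 2).
  assert (HS : 0 < S).
  { unfold S.
    assert (0 < (IZR q * Y) ^ 2) by (apply pow_lt; nra).
    assert (0 <= (IZR q * d) ^ 2) by apply pow2_ge_0.
    lra. }
  rewrite Im_mobius; rewrite Hshift; fold S; [|lra].
  rewrite Hdet.
  replace (IZR q ^ 2 * (d ^ 2 + Y ^ 2)) with S in Hr by (unfold S; ring).
  apply (Rmult_lt_reg_r S); [exact HS|].
  replace (1 * Y / S * S) with Y by (field; lra).
  exact Hr.
Qed.

Lemma half_Rmin_mul_lt (P Y N e Q : R) :
  0 < P -> 0 < Y -> 0 < N -> e ^ 2 < P ^ 2 -> 0 <= Q <= N ->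
  / 2 * Rmin (Y / P ^ 2) (/ (N ^ 2 * Y)) * (e ^ 2 + (Q * Y) ^ 2) < Y.
Proof.
  intros HP HY HN He HQ.
  set (M := Rmin (Y / P ^ 2) (/ (N ^ 2 * Y))).
  assert (HM0 : 0 < M).
  { unfold M, Rmin. destruct (Rle_dec _ _).
    - apply Rdiv_lt_0_compat; [lra|apply pow_lt; lra].
    - apply Rinv_0_lt_compat, Rmult_lt_0_compat; [apply pow_lt|]; lra. }
  assert (HMP : M * P ^ 2 <= Y).
  { apply Rle_trans with (Y / P ^ 2 * P ^ 2).
    - apply Rmult_le_compat_r; [apply pow2_ge_0|apply Rmin_l].
    - right. field. lra. }
  assert (HMN : M * (N ^ 2 * Y * Y) <= Y).
  { apply Rle_trans with (/ (N ^ 2 * Y) * (N ^ 2 * Y * Y)).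
    - apply Rmult_le_compat_r; [|apply Rmin_r].
      apply Rmult_le_pos; [apply Rmult_le_pos; [apply pow2_ge_0|]|]; lra.
    - right. field. lra. }
  assert (HQY : (Q * Y) ^ 2 <= N ^ 2 * Y * Y).
  { replace (N ^ 2 * Y * Y) with ((N * Y) ^ 2) by ring.
    apply pow_incr. nra. }
  nra.
Qed.

Lemma Rn_in_cusp_of_approximation (psi y : nat -> R) (x : R) (n : nat) (m : Z) :
  (1 <= n)%nat -> 0 < psi n -> 0 < y n ->
  Rabs (x - IZR m / INR n) < psi n / INR n ->
  Rn_in_cusp n x (y n) (r_seq psi y n).
Proof.
  intros Hn1 Hpsi Hy Hm j Hj.
  assert (HnZ : (0 < Z.of_nat n)%Z) by lia.
  assert (Hn0 : 0 < INR n) by (apply lt_0_INR; lia).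
  destruct (exists_reduced_fraction (m + Z.of_nat j) (Z.of_nat n) HnZ)
    as [p [q [Hq [Hkq Hpq]]]].
  assert (Hq1 : 1 <= IZR q) by (apply IZR_le; lia).
  assert (Hqn : IZR q <= INR n) by (rewrite INR_IZR_INZ; apply IZR_le; lia).
  set (d := x - IZR m / INR n).
  assert (Hsplit : x + INR j / INR n = IZR p / IZR q + d).
  { assert (E : (IZR m + INR j) * IZR q = IZR p * INR n).
    { rewrite !INR_IZR_INZ, <- plus_IZR, <- !mult_IZR. f_equal. exact Hkq. }
    unfold d. apply (Rmult_eq_reg_r (INR n * IZR q)); [|nra].
    field_simplify; [|lra|lra]. nra. }
  assert (Hqd : (IZR q * d) ^ 2 < psi n ^ 2).
  { assert (Habs : Rabs (IZR q * d) < psi n).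
    { rewrite Rabs_mult, (Rabs_pos_eq (IZR q)) by lra.
      apply Rle_lt_trans with (INR n * Rabs d).
      - apply Rmult_le_compat_r; [apply Rabs_pos|lra].
      - apply (Rmult_lt_reg_r (/ INR n)); [apply Rinv_0_lt_compat; lra|].
        replace (INR n * Rabs d * / INR n) with (Rabs d) by (field; lra).
        exact Hm. }
    rewrite <- pow2_abs.
    assert (0 <= Rabs (IZR q * d)) by apply Rabs_pos.
    nra. }
  rewrite Hsplit. apply in_cusp_near_rational; [exact Hpq|lia|exact Hy|].
  replace (IZR q ^ 2 * (d ^ 2 + y n ^ 2))
    with ((IZR q * d) ^ 2 + (IZR q * y n) ^ 2) by ring.
  apply half_Rmin_mul_lt; lra.
Qed.

Theorem theorem4p3 (psi : nat -> R) (y : nat -> R) (x : R)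
  (Hpsi_range : forall n : nat, (1 <= n)%nat -> 0 < psi n < / 2)
  (Hpsi_noninc : forall n m : nat, (1 <= n)%nat -> (n <= m)%nat -> psi m <= psi n)
  (Hpsi_lim : Un_cv (fun n => INR n * psi n) 0)
  (Hy_pos : forall n : nat, (1 <= n)%nat -> 0 < y n)
  (Hr_inf : cv_infty (r_seq psi y))
  (Hx : 0 <= x < 1)
  (Happrox : primitive_psi_approximable psi x) :
  forall N : nat, exists n : nat, (N <= n)%nat /\ (1 <= n)%nat /\
    Rn_in_cusp n x (y n) (r_seq psi y n).
Proof.
  intros N.
  destruct (Happrox N) as [n [HNn [Hn1 [m [_ Hm]]]]].
  exists n. split; [exact HNn|]. split; [exact Hn1|].
  apply (Rn_in_cusp_of_approximation psi y x n m Hn1).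
  - apply Hpsi_range, Hn1.
  - apply Hy_pos, Hn1.
  - exact Hm.
Qed.
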